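(* Assume $q_*(y)>0$ if and only if $\mathrm{numK}(y)=0$. Let $T>0$. Then for every $t\in[0,T)$ and every $y\in\mathcal{Y}$, $$R^\gets_t(y):=\sum_{y'\neq y}R^\gets_t(y',y)=\sum_{y'\neq y}R^\to(y,y')\,\frac{q^\gets_t(y')}{q^\gets_t(y)}\;\le\;\frac{\mathrm{numK}(y)\cdot K}{e^{T-t}-1}.$$
   Context: Fix integers $K\ge2$, $d\ge1$ and $\mathcal{Y}=\{1,\dots,K\}^d$; the symbol $K$ is the mask token. For $y\in\mathcal{Y}$, $\mathrm{numK}(y)=\#\{i: y_i=K\}$. The masked forward process $(\mathbf{y}^\to_t)_{t\ge0}$ is the time-homogeneous continuous-time Markov chain on $\mathcal{Y}$ with $\mathbf{y}^\to_0\sim q_*$ and rate function $R^\to(y,y')$ (rate of jumping from $y'$ to $y$): $R^\to(y,y')=1$ if $y$ and $y'$ differ in exactly one coordinate $i$ and $y_i=K$; $R^\to(y,y)=-(d-\mathrm{numK}(y))$; $0$ otherwise. Its marginals are $q^\to_t$. For $T>0$ the reverse marginals are $q^\gets_t:=q^\to_{T-t}$, $t\in[0,T)$, and $R^\gets_t(y',y):=R^\to(y,y')q^\gets_t(y')/q^\gets_t(y)$ for $y'\neq y$ (under the hypothesis, $q^\to_s(y)>0$ for all $y$ and $s>0$). *)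

From HB Require Import structures.
From mathcomp Require Import all_boot all_order all_algebra.
From mathcomp Require Import all_classical all_reals all_analysis.
Set Implicit Arguments. Unset Strict Implicit. Unset Printing Implicit Defensive.
Import Order.TTheory GRing.Theory Num.Theory.
Local Open Scope ring_scope.
Local Open Scope classical_set_scope.
Import numFieldNormedType.Exports.

(* Tokens {1,...,K} are represented by 'I_K (token j+1 <-> ordinal j);
   the mask token K is the ordinal with value K.-1. *)
Definition is_mask (K : nat) (a : 'I_K) : bool := (a : nat) == K.-1.

Definition Yst (K d : nat) := {ffun 'I_d -> 'I_K}.

Definition numK (K d : nat) (y : Yst K d) : nat := #|[set i | is_mask (y i)]|.

(* Forward rate R^->(y, y') : rate of jumping from y' to y. *)
Definition Rfwd (R : realType) (K d : nat) (y y' : Yst K d) : R :=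
  if y == y' then - ((d - numK y)%:R)
  else if (#|[set i | y i != y' i]| == 1%N) &&
          [forall i, (y i != y' i) ==> is_mask (y i)]
       then 1 else 0.

(* q : [0,+oo) -> distributions on Y are the marginals of the forward CTMC
   started at q_star : they solve the Kolmogorov forward equation
   d/dt q_t(y) = sum_{y'} R^->(y,y') q_t(y') for t > 0, with q_t -> q_star
   as t -> 0+ and q_0 = q_star. *)
Definition forward_marginals (R : realType) (K d : nat)
  (q_star : Yst K d -> R) (q : R -> Yst K d -> R) : Prop :=
  (forall y, q 0 y = q_star y) /\
  (forall y, q x y @[x --> 0^'+] --> q_star y) /\
  (forall t : R, 0 < t -> forall y,
      is_derive t (1 : R) (fun s : R => q s y) (\sum_(y' : Yst K d) @Rfwd R K d y y' * q t y')).

Definition Rrev (R : realType) (K d : nat) (q : R -> Yst K d -> R) (T t : R)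
  (y' y : Yst K d) : R :=
  @Rfwd R K d y y' * q (T - t) y' / q (T - t) y.

From mathcomp Require Import all_boot all_order all_algebra.
From mathcomp Require Import all_classical all_reals all_analysis.
From mathcomp Require Import ring.
Import numFieldNormedType.Exports.
Import Order.TTheory GRing.Theory Num.Theory.
Set Implicit Arguments.
Unset Strict Implicit.
Unset Printing Implicit Defensive.
Local Open Scope ring_scope.
Local Open Scope classical_set_scope.

(** Write [m y := numK y] and [U_y(s)] for the mass [q_s] puts on the states
    obtained from [y] by unmasking one coordinate (those [y'] with
    [m y' = m y - 1]).  The Kolmogorov equation reads
    [q_s(y)' = -(d - m y) q_s(y) + U_y(s)].  The defect
    [D_y(s) := (e^s - 1) U_y(s) - m y q_s(y)] satisfies the linear equation
    [D_y' = -(d - m y) D_y] as soon as the defects of all these [y'] vanish,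
    and [D_y(0+) = - m y q_*(y) = 0] because [q_*] is supported on unmasked
    states.  By induction on [m y] every defect vanishes, so the reverse exit
    rate [U_y(T - t) / q_(T-t)(y)] equals [m y / (e^(T-t) - 1)] exactly; the
    factor [K] in the bound is slack. *)

Section FiniteSums.
Variables (R : realType) (I : finType) (P : pred I).

Lemma cvg_sumr (T : Type) (F : set_system T) (FF : Filter F)
    (f : I -> T -> R) (l : I -> R) :
  (forall i, P i -> f i @ F --> l i) ->
  \sum_(i | P i) f i x @[x --> F] --> \sum_(i | P i) l i.
Proof.
move=> fl; rewrite -(fct_sumE _ _ f).
elim/big_ind2: _ => // [|g a h b ga hb]; first exact: cvg_cst.
exact: cvgD.
Qed.

Lemma is_derive_sumr (f : I -> R -> R) (df : I -> R) (x : R) :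
  (forall i, P i -> is_derive x 1 (f i) (df i)) ->
  is_derive x 1 (fun s => \sum_(i | P i) f i s) (\sum_(i | P i) df i).
Proof.
move=> fdf; rewrite -(fct_sumE _ _ f).
elim/big_ind2: _ => // [|g a h b ga hb]; first exact: is_derive_cst.
exact: is_deriveD.
Qed.

End FiniteSums.

(* [h^2] is nonincreasing on [(0, +oo)] and tends to [0] at [0+]. *)
Lemma linear_ode_eq0 (R : realType) (c : R) (h : R -> R) : 0 <= c ->
  (forall s : R, 0 < s -> is_derive s 1 h (- c * h s)) ->
  h x @[x --> 0^'+] --> 0 ->
  forall s : R, 0 < s -> h s = 0.
Proof.
move=> c0 dh h0 s s0.
pose g x := h x * h x.
have dg (x : R) : 0 < x -> is_derive x 1 g (- (c * 2) * g x).
  move=> x0; apply: is_derive_eq; first exact: is_deriveM (dh x x0) (dh x x0).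
  by rewrite /GRing.scale /= /g; ring.
have g_nincr (a : R) : 0 < a -> a < s -> g s <= g a.
  move=> a0 As; rewrite -subr_le0.
  have [xi _ ->] :
      exists2 xi, xi \in `]a, s[%R & g s - g a = - (c * 2) * g xi * (s - a).
    apply: MVT => // [x /[!in_itv] /= /andP[ax _]|].
      exact/dg/(lt_trans a0).
    apply: derivable_within_continuous => x /[!in_itv] /= /andP[ax _].
    exact: @ex_derive _ _ _ _ _ _ _ (dg x (lt_le_trans a0 ax)).
  rewrite mulNr mulNr oppr_le0; apply: mulr_ge0; last by rewrite subr_ge0 ltW.
  by rewrite /g -expr2 mulr_ge0 ?sqr_ge0 ?mulr_ge0.
have g0 : g x @[x --> 0^'+] --> 0 by have := cvgM h0 h0; rewrite mulr0; exact.
have : g s <= 0.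
  rewrite leNgt; apply/negP => gs_gt0.
  have /filter_ex [a [a0 As gas]] :
      \forall a \near 0^'+, [/\ 0 < a, a < s & g a < g s].
    near=> a; split.
    - by near: a; exact: nbhs_right_gt.
    - by near: a; exact: nbhs_right_lt.
    - by near: a; exact: (cvgr_lt _ g0).
  by have := g_nincr a a0 As; rewrite leNgt gas.
by rewrite /g -expr2 le_eqVlt ltNge sqr_ge0 orbF sqrf_eq0 => /eqP.
Unshelve. all: by end_near.
Qed.

Lemma card_classical_set (T : finType) (P : pred T) :
  #|[set i | P i]| = #|[set i | P i]%SET|.
Proof.
by apply: eq_card => i; rewrite inE; apply/idP/idP => [/set_mem|/mem_set].
Qed.

Section Unmasking.
Variables (K d : nat).
Implicit Types y : Yst K d.

Definition unmasking y y' : bool :=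
  [&& y != y', #|[set i | y i != y' i]%SET| == 1%N &
      [forall i, (y i != y' i) ==> is_mask (y i)]].

Lemma numK_le y : (numK y <= d)%N.
Proof. by rewrite -[leqRHS](card_ord d) max_card. Qed.

Lemma numK_unmasking y y' : unmasking y y' -> numK y = (numK y').+1.
Proof.
case/and3P=> _ /cards1P [i0 diff_i0] /forallP diff_masked.
have diffE i : (y i != y' i) = (i == i0).
  by move/setP/(_ i): diff_i0; rewrite !inE.
have mask_i0 : is_mask (y i0) by have := diff_masked i0; rewrite diffE eqxx.
have unmask_i0 : ~~ is_mask (y' i0).
  apply/negP => mask'_i0; have := diffE i0; rewrite eqxx => /negP; apply.
  by apply/eqP/val_inj; rewrite /= (eqP mask_i0) (eqP mask'_i0).
rewrite /numK !card_classical_set.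
have -> : [set i | is_mask (y i)]%SET = i0 |: [set i | is_mask (y' i)]%SET.
  apply/setP => i; rewrite !inE.
  case: (eqVneq i i0) => [->|ne]; first by rewrite mask_i0.
  by move: (diffE i); rewrite (negbTE ne) => /negbFE/eqP ->.
by rewrite cardsU1 inE unmask_i0.
Qed.

Lemma natr_numK_unmasking (R : ringType) y y' :
  unmasking y y' -> (numK y')%:R = (numK y)%:R - 1 :> R.
Proof. by move/numK_unmasking ->; rewrite -natr1 addrK. Qed.

Lemma natr_subn_numK_unmasking (R : ringType) y y' :
  unmasking y y' -> (d - numK y')%:R = (d - numK y)%:R + 1 :> R.
Proof.
move=> yy'; have := numK_le y; rewrite (numK_unmasking yy') natr1 => ?.
by rewrite subnSK.
Qed.

Lemma Rfwd_neq (R : realType) y y' :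
  y != y' -> Rfwd R y y' = (unmasking y y')%:R.
Proof.
move=> ne; rewrite /Rfwd /unmasking (negbTE ne) card_classical_set.
by case: ifP.
Qed.

Lemma sum_Rfwd_neq (R : realType) y (f : Yst K d -> R) :
  \sum_(y' | y' != y) Rfwd R y y' * f y' = \sum_(y' | unmasking y y') f y'.
Proof.
rewrite big_mkcond [RHS]big_mkcond; apply: eq_bigr => y' _.
case: (eqVneq y' y) => [->|ne] /=; first by rewrite /unmasking eqxx.
by rewrite Rfwd_neq 1?eq_sym //; case: unmasking; rewrite ?mul1r ?mul0r.
Qed.

Lemma sum_Rfwd (R : realType) y (f : Yst K d -> R) :
  \sum_y' Rfwd R y y' * f y' =
  - (d - numK y)%:R * f y + \sum_(y' | unmasking y y') f y'.
Proof. by rewrite (bigD1 y) //= sum_Rfwd_neq /Rfwd eqxx. Qed.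

End Unmasking.

Section ForwardMarginals.
Variables (R : realType) (K d : nat).
Variables (q_star : Yst K d -> R) (q : R -> Yst K d -> R).
Hypothesis hq : forward_marginals q_star q.
Hypothesis q_star_masked : forall y, numK y != 0%N -> q_star y = 0.
Implicit Types y : Yst K d.

Definition inflow y (s : R) := \sum_(y' | unmasking y y') q s y'.

Definition defect y (s : R) := (expR s - 1) * inflow y s - (numK y)%:R * q s y.

Lemma is_derive_marginal y (s : R) : 0 < s ->
  is_derive s 1 (q^~ y) (- (d - numK y)%:R * q s y + inflow y s).
Proof. by move=> s0; rewrite /inflow -sum_Rfwd; exact: hq.2.2. Qed.

Lemma is_derive_inflow y (s : R) : 0 < s ->
  is_derive s 1 (inflow y)
    (- ((d - numK y)%:R + 1) * inflow y s +
     \sum_(y' | unmasking y y') inflow y' s).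
Proof.
move=> s0; rewrite mulNr /inflow mulr_sumr -sumrN -big_split /=.
apply: (is_derive_sumr (f := fun y' s => q s y')) => y' yy'.
by rewrite -mulNr -(natr_subn_numK_unmasking _ yy'); exact: is_derive_marginal.
Qed.

Lemma is_derive_defect y :
  (forall y', unmasking y y' -> forall s, 0 < s -> defect y' s = 0) ->
  forall s : R, 0 < s ->
  is_derive s 1 (defect y) (- (d - numK y)%:R * defect y s).
Proof.
move=> defect_nb0 s s0.
have inflow_nb : (expR s - 1) * \sum_(y' | unmasking y y') inflow y' s =
                 ((numK y)%:R - 1) * inflow y s.
  rewrite mulr_sumr /inflow mulr_sumr; apply: eq_bigr => y' yy'.
  by apply/subr0_eq; rewrite -(natr_numK_unmasking _ yy'); exact: defect_nb0.
have de := is_deriveB (is_derive_expR s) (is_derive_cst (1 : R) s 1).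
have dm := is_derive_cst ((numK y)%:R : R) s 1.
have dD := is_deriveB (is_deriveM de (is_derive_inflow y s0))
                      (is_deriveM dm (is_derive_marginal y s0)).
apply: (is_derive_eq dD); apply/subr0_eq.
transitivity ((expR s - 1) * \sum_(y' | unmasking y y') inflow y' s -
              ((numK y)%:R - 1) * inflow y s).
  by rewrite /defect !fctE /GRing.scale /=; ring.
by rewrite inflow_nb subrr.
Qed.

Lemma numK_mul_q_star y : (numK y)%:R * q_star y = 0.
Proof.
by have [->|/q_star_masked ->] := eqVneq (numK y) 0%N; rewrite ?mul0r ?mulr0.
Qed.

Lemma defect_cvg0 y : defect y x @[x --> 0^'+] --> 0.
Proof.
have e0 : expR x - 1 @[x --> (0 : R)^'+] --> 0.
  have := cvg_at_right_filter (@continuous_expR R 0).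
  by rewrite expR0 => /cvgB /(_ (cvg_cst (1 : R))); rewrite subrr.
suff : defect y x @[x --> 0^'+] -->
       0 * \sum_(y' | unmasking y y') q_star y' - (numK y)%:R * q_star y.
  by rewrite mul0r numK_mul_q_star subrr.
apply: cvgB; apply: cvgM; [exact: e0 | exact: cvg_sumr (fun y' _ => hq.2.1 y')
                          | exact: cvg_cst | exact: hq.2.1].
Qed.

Lemma defect_eq0 y : forall s : R, 0 < s -> defect y s = 0.
Proof.
have [n] : exists n, numK y = n by eexists.
elim: n y => [|n IH] y ny.
all: apply: (linear_ode_eq0 (c := (d - numK y)%:R)) (defect_cvg0 y) => //.
all: apply: is_derive_defect => y' /numK_unmasking.
all: by rewrite ny // => -[/esym /IH].
Qed.

Lemma inflow_eq y (s : R) : 0 < s ->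
  inflow y s = (numK y)%:R * q s y / (expR s - 1).
Proof.
move=> s0; have e1 : expR s - 1 != 0 by rewrite subr_eq0 gt_eqF ?expR_gt1.
by apply: (canRL (mulfK e1)); apply/subr0_eq; rewrite mulrC; exact: defect_eq0.
Qed.

End ForwardMarginals.

Lemma sum_Rrev (R : realType) (K d : nat) (q : R -> Yst K d -> R) (T t : R) y :
  \sum_(y' | y' != y) Rrev q T t y' y = inflow q y (T - t) / q (T - t) y.
Proof. by rewrite /Rrev -mulr_suml sum_Rfwd_neq. Qed.

Theorem lemma3 (R : realType) (K d : nat) (hK : (2 <= K)%N) (hd : (1 <= d)%N)
  (q_star : Yst K d -> R)
  (hq_nonneg : forall y, 0 <= q_star y)
  (hq_sum : \sum_(y : Yst K d) q_star y = 1)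
  (hq_supp : forall y, 0 < q_star y <-> numK y = 0%N)
  (q : R -> Yst K d -> R)
  (hq : forward_marginals q_star q)
  (T : R) (hT : 0 < T) (t : R) (ht0 : 0 <= t) (htT : t < T) (y : Yst K d) :
  \sum_(y' : Yst K d | y' != y) Rrev q T t y' y
    <= (numK y)%:R * K%:R / (expR (T - t) - 1).
Proof.
have q_star_masked y0 : numK y0 != 0%N -> q_star y0 = 0.
  move=> ny0; apply/eqP; rewrite eq_le hq_nonneg andbT leNgt.
  by apply: contra ny0 => /hq_supp/eqP.
have tT : 0 < T - t by rewrite subr_gt0.
rewrite sum_Rrev (inflow_eq hq q_star_masked y tT).
set m := (numK y)%:R; set e := expR (T - t); set p := q (T - t) y.
have rate_ge0 : 0 <= m / (e - 1).
  by rewrite divr_ge0 ?ler0n // subr_ge0 ltW ?expR_gt1.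
have -> : m * p / (e - 1) / p = m / (e - 1) * (p / p).
  by rewrite -!mulrA; congr (_ * _); rewrite mulrCA.
apply: (le_trans (ler_piMr rate_ge0 _)).
  by have [->|p0] := eqVneq p 0; rewrite ?mul0r ?ler01 ?divff.
by rewrite mulrAC ler_peMr // ler1n (ltnW hK).
Qed.
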